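(* Let $(\mathcal{T},X,r)$ be a nice tree decomposition of a terminal graph $(G,T)$ of width at most $w\ge1$, and let $n=|V(G)|\ge1$. Then $|V(\mathcal{T})|\le (w+4)n$.
   Context: A terminal graph $(G,T)$ is a graph with $T\subseteq V(G)$. $(G,T)$ is obtained from $(G-v,T\setminus\{v\})$ by introducing $v$ if $T\ne V(G)$, $v\in T$ and $N(v)\subseteq T$. $(G,T)$ is the join of $(G_1,T)$ and $(G_2,T)$ if $G_1,G_2$ are induced subgraphs of $G$, $V(G_1)\cap V(G_2)=T$, $V(G_1)\cup V(G_2)=V(G)$, $V(G_1)\ne T\ne V(G_2)$, and every edge of $G$ lies in $G_1$ or $G_2$. A nice tree decomposition of $(G,T)$ is a triple $(\mathcal{T},X,r)$ with $\mathcal{T}$ a tree rooted at $r$ and bags $X_u\subseteq V(G)$, defined recursively: (1) if $T=V(G)$, $\mathcal{T}$ may be the single node $r$ with $X_r=T$; (2) if $v\in V(G)\setminus T$ and $(\mathcal{T}',X,r')$ is a nice tree decomposition of $(G,T\cup\{v\})$, adding a new root $r$ with $X_r=T$ and edge $rr'$ gives one for $(G,T)$; (3) if $(G,T)$ is obtained from $(G-v,T\setminus\{v\})$ by introducing $v$ and $(\mathcal{T}',X,r')$ is one for $(G-v,T\setminus\{v\})$, adding a new root $r$ with $X_r=T$ and edge $rr'$ gives one for $(G,T)$; (4) if $(G,T)$ is the join of $(G_1,T)$ and $(G_2,T)$ with nice tree decompositions $(\mathcal{T}_i,X,r_i)$, adding a new root $r$ with $X_r=T$ and edges $rr_1,rr_2$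 gives one for $(G,T)$. The width is $\max_u |X_u|-1$. *)

From mathcomp Require Import all_boot.
Set Implicit Arguments. Unset Strict Implicit. Unset Printing Implicit Defensive.

Record graph (U : finType) := Graph { gV : {set U}; gE : {set {set U}} }.

Definition wf_graph (U : finType) (G : graph U) : Prop :=
  forall e, e \in gE G -> e \subset gV G /\ #|e| = 2.

Definition induced (U : finType) (G : graph U) (S : {set U}) : graph U :=
  Graph S [set e in gE G | e \subset S].

Definition del_vertex (U : finType) (G : graph U) (v : U) : graph U :=
  induced G (gV G :\ v).

Definition nbhd (U : finType) (G : graph U) (v : U) : {set U} :=
  [set u in gV G | [set u; v] \in gE G].

(* (G,T) is obtained from (G-v, T\{v}) by introducing v *)
Definition introduces (U : finType) (G : graph U) (T : {set U}) (v : U) : Prop :=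
  T != gV G /\ v \in T /\ nbhd G v \subset T.

(* (G,T) is the join of (G[V1],T) and (G[V2],T) *)
Definition is_join (U : finType) (G : graph U) (T V1 V2 : {set U}) : Prop :=
  (V1 \subset gV G /\ V2 \subset gV G) /\ V1 :&: V2 = T /\ V1 :|: V2 = gV G /\
  V1 != T /\ T != V2 /\
  (forall e, e \in gE G -> e \subset V1 \/ e \subset V2).

Inductive btree (U : finType) :=
| BLeaf of {set U}
| BNode1 of {set U} & btree U
| BNode2 of {set U} & btree U & btree U.

Definition root_bag (U : finType) (t : btree U) : {set U} :=
  match t with BLeaf X => X | BNode1 X _ => X | BNode2 X _ _ => X end.

Fixpoint nnodes (U : finType) (t : btree U) : nat :=
  match t with
  | BLeaf _ => 1
  | BNode1 _ t1 => (nnodes t1).+1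
  | BNode2 _ t1 t2 => (nnodes t1 + nnodes t2).+1
  end.

Fixpoint max_bag (U : finType) (t : btree U) : nat :=
  match t with
  | BLeaf X => #|X|
  | BNode1 X t1 => maxn #|X| (max_bag t1)
  | BNode2 X t1 t2 => maxn #|X| (maxn (max_bag t1) (max_bag t2))
  end.

Inductive nice_td (U : finType) : graph U -> {set U} -> btree U -> Prop :=
| ntd_leaf G T : T = gV G -> nice_td G T (BLeaf T)
| ntd_forget G T v t :
    v \in gV G :\: T -> nice_td G (v |: T) t -> nice_td G T (BNode1 T t)
| ntd_intro G T v t :
    introduces G T v -> nice_td (del_vertex G v) (T :\ v) t ->
    nice_td G T (BNode1 T t)
| ntd_join G T V1 V2 t1 t2 :
    is_join G T V1 V2 -> nice_td (induced G V1) T t1 ->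
    nice_td (induced G V2) T t2 -> nice_td G T (BNode2 T t1 t2).

Definition width (U : finType) (t : btree U) : nat := (max_bag t).-1.

From mathcomp Require Import all_boot.
From mathcomp Require Import zify.

Set Implicit Arguments.
Unset Strict Implicit.
Unset Printing Implicit Defensive.

(* Induction on the decomposition with the potential
   (w + 4) (n - |T|) + |T| - (w + 2), valid whenever T <> V(G).
   A forget node lowers n - |T| by one, which pays w + 4 for one node; an
   introduce node keeps n - |T| but raises |T| by one, which pays for the node;
   at a join node the children split n - |T| exactly, and the bag T,
   counted twice, costs |T| <= w + 1 < w + 2, which the constant absorbs.
   When T = V(G) the decomposition is a single leaf. *)

Lemma nnodes_nice_td_full (U : finType) (G : graph U) T t :
  nice_td G T t -> T = gV G -> nnodes t = 1.
Proof.
case=> {G T t} //.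
- by move=> G T v t; rewrite inE => /andP [vNT vG] _ TG; rewrite TG vG in vNT.
- by move=> G T v t [/eqP TG _] _.
- move=> G T V1 V2 t1 t2 [[V1G _] [V12 [_ [/eqP V1T _]]]] _ _ TG.
  by case: V1T; apply/eqP; rewrite eqEsubset {1}TG V1G -V12 subsetIl.
Qed.

Lemma nnodes_nice_td_proper (U : finType) (w : nat) (G : graph U) T t :
  nice_td G T t -> T \subset gV G -> max_bag t <= w.+1 -> T != gV G ->
  nnodes t + w + 2 <= (w + 4) * (#|gV G| - #|T|) + #|T|.
Proof.
elim=> {G T t} /=.
- by move=> G T ->; rewrite eqxx.
- move=> G T v t; rewrite inE => /andP [vNT vG] Ht IH TG.
  rewrite geq_max => /andP [_ tw] _.
  have vTG : v |: T \subset gV G by rewrite subUset sub1set vG TG.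
  have vT_card : #|v |: T| = #|T|.+1 by rewrite cardsU1 vNT.
  have := subset_leq_card vTG; rewrite vT_card => ltTG.
  have [vT_full | vT_proper] := eqVneq (v |: T) (gV G).
  + rewrite (nnodes_nice_td_full Ht vT_full); nia.
  + have := IH vTG tw vT_proper; rewrite vT_card; nia.
- move=> G T v t [TNG [vT _]] _ IH TG.
  rewrite geq_max => /andP [_ tw] _.
  have vG : v \in gV G by apply: (subsetP TG).
  have child_proper : T :\ v != gV (del_vertex G v).
    apply: contra TNG => /eqP /= TvG.
    by rewrite -(setD1K vT) -(setD1K vG) TvG.
  have := IH (setSD _ TG) tw child_proper.
  have := cardsD1 v T; have := cardsD1 v (gV G); rewrite vT vG /=.
  nia.
- move=> G T V1 V2 t1 t2 [[V1G V2G] [V12 [V12G [V1T [TV2 _]]]]] _ IH1 _ IH2 _.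
  rewrite !geq_max => /andP [Tw /andP [t1w t2w]] _.
  have TV1 : T \subset V1 by rewrite -V12 subsetIl.
  have TV2' : T \subset V2 by rewrite -V12 subsetIr.
  have := IH1 TV1 t1w (ltac:(by rewrite eq_sym)).
  have := IH2 TV2' t2w TV2.
  have := cardsUI V1 V2; rewrite V12G V12.
  have := subset_leq_card TV1; have := subset_leq_card TV2'.
  nia.
Qed.

Theorem lemma5 (U : finType) (G : graph U) (T : {set U}) (t : btree U)
  (w : nat) :
  wf_graph G -> T \subset gV G ->
  nice_td G T t -> width t <= w -> 1 <= w -> 1 <= #|gV G| ->
  nnodes t <= (w + 4) * #|gV G|.
Proof.
move=> _ TG Ht tw _ n_pos.
have max_bag_w : max_bag t <= w.+1 by move: tw; rewrite /width; case: max_bag.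
have TG_card := subset_leq_card TG.
have [T_full | T_proper] := eqVneq T (gV G).
- by rewrite (nnodes_nice_td_full Ht T_full); nia.
- by have := nnodes_nice_td_proper Ht TG max_bag_w T_proper; nia.
Qed.
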